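(* Let $n\ge1$ and let $V=\bigoplus_{i=1}^{2n-1}V_i$, $W=\bigoplus_{i=1}^{2n-1}W_i$ be graded complex vector spaces with $\dim V_i=\dim V_{2n-i}$, $W_i=0$ for $i\ne n$, $\dim W_n=2$, and satisfying the nonemptiness condition below. Let $\sigma_n$ be an involution of $W_n$, $\langle\cdot,\cdot\rangle_n$ a nondegenerate skew-symmetric bilinear form on $W_n$, $(w,y)_n:=\langle w,\sigma_n(y)\rangle_n$, and $x\mapsto x^{\mathbf t}$ the transpose anti-automorphism of $\mathrm{End}(W_n)$ with respect to $(\cdot,\cdot)_n$. Then for every $(B_{i,j},\Gamma_i,\Delta_i)\in\Lambda^{\mathrm A_{2n-1}}(V,W)$ and every $1\le j\le n$, \[(\Delta_nB_{n,n-j+1,n}\Gamma_n)^{\mathbf t}=(-1)^j\,\sigma_n\Delta_nB_{n,n+j-1,n}\Gamma_n\sigma_n.\]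
   Context: $B_{i,j}$ ($|i-j|=1$) is a linear map $V_j\to V_i$, $\Gamma_i:W_i\to V_i$, $\Delta_i:V_i\to W_i$. $\Lambda^{\mathrm A_{2n-1}}(V,W)$ is the set of tuples satisfying (with $B_{0,1},B_{1,0},B_{2n,2n-1},B_{2n-1,2n}$ zero): $B_{i,i+1}B_{i+1,i}-B_{i,i-1}B_{i-1,i}=\Gamma_i\Delta_i$ for $1\le i\le n-1$; $-B_{n,n-1}B_{n-1,n}-B_{n,n+1}B_{n+1,n}=\Gamma_n\Delta_n$; $B_{i,i-1}B_{i-1,i}-B_{i,i+1}B_{i+1,i}=\Gamma_i\Delta_i$ for $n+1\le i\le2n-1$. Path notation: $B_{n,n-j+1,n}=B_{n,n-1}B_{n-1,n-2}\cdots B_{n-j+2,n-j+1}B_{n-j+1,n-j+2}\cdots B_{n-1,n}$ (the composite along the path $n\to n-1\to\dots\to n-j+1\to\dots\to n$), and similarly $B_{n,n+j-1,n}=B_{n,n+1}\cdots B_{n+j-2,n+j-1}B_{n+j-1,n+j-2}\cdots B_{n+1,n}$; for $j=1$ both are $\mathrm{id}_{V_n}$. Nonemptiness condition: with $v_i=\dim V_i$, put $s_1=1-v_1$ and $s_i=1-v_i+v_{i-1}$ for $2\le i\le n$; then $s_i\in\{-1,0,1\}$ for all $i$ and $|\{i:s_i\ne0\}|\le n$. *)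

From mathcomp Require Import all_boot all_algebra.
From mathcomp Require Import complex.
From mathcomp Require Import reals Rstruct.
Set Implicit Arguments. Unset Strict Implicit. Unset Printing Implicit Defensive.
Import GRing.Theory.
Local Open Scope ring_scope.

Definition C : fieldType := Rdefinitions.R[i].

(* Linear maps are matrices acting on column
   vectors, so a map V_j -> V_i is a 'M_(v i, v j) and composition is *m.
     Bl i = B_{i,i-1} : V_{i-1} -> V_i   ('M_(v i, v i.-1))
     Br i = B_{i-1,i} : V_i -> V_{i-1}   ('M_(v i.-1, v i))
   so B_{i,i+1} = Br i.+1 and B_{i+1,i} = Bl i.+1. *)

(* Ldown a k = B_{a,a-1} B_{a-1,a-2} ... B_{a-k+1,a-k} B_{a-k,a-k+1} ... B_{a-1,a},
   i.e. the loop a -> a-1 -> ... -> a-k -> ... -> a; Ldown a 0 = id. *)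
Fixpoint Ldown (v : nat -> nat) (Bl : forall i, 'M[C]_(v i, v i.-1))
  (Br : forall i, 'M[C]_(v i.-1, v i)) (k a : nat) : 'M[C]_(v a) :=
  match k with
  | 0 => 1%:M
  | k'.+1 => Bl a *m Ldown Bl Br k' a.-1 *m Br a
  end.

(* Lup a k = B_{a,a+1} ... B_{a+k-1,a+k} B_{a+k,a+k-1} ... B_{a+1,a}. *)
Fixpoint Lup (v : nat -> nat) (Bl : forall i, 'M[C]_(v i, v i.-1))
  (Br : forall i, 'M[C]_(v i.-1, v i)) (k a : nat) : 'M[C]_(v a) :=
  match k with
  | 0 => 1%:M
  | k'.+1 => Br a.+1 *m Lup Bl Br k' a.+1 *m Bl a.+1
  end.

(* B_{n,n-j+1,n} and B_{n,n+j-1,n} (for j >= 1, the loop has depth j-1). *)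
Definition pathDown v Bl Br (n j : nat) : 'M[C]_(v n) := @Ldown v Bl Br j.-1 n.
Definition pathUp v Bl Br (n j : nat) : 'M[C]_(v n) := @Lup v Bl Br j.-1 n.

(* The tuple (B, Gamma, Delta) lies in Lambda^{A_{2n-1}}(V,W), where W_i = 0
   for i <> n (so Gamma_i Delta_i = 0 for i <> n) and W_n has dimension 2.
   Boundary maps B_{0,1}, B_{1,0}, B_{2n,2n-1}, B_{2n-1,2n} are zero. *)
Definition in_Lambda (n : nat) (v : nat -> nat)
  (Bl : forall i, 'M[C]_(v i, v i.-1)) (Br : forall i, 'M[C]_(v i.-1, v i))
  (Gam : 'M[C]_(v n, 2)) (Del : 'M[C]_(2, v n)) : Prop :=
  [/\ Bl 1%N = 0 /\ Br 1%N = 0, Bl (2 * n)%N = 0 /\ Br (2 * n)%N = 0,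
      (forall i, (1 <= i <= n - 1)%N ->
         Br i.+1 *m Bl i.+1 - Bl i *m Br i = 0),
      - (Bl n *m Br n) - Br n.+1 *m Bl n.+1 = Gam *m Del &
      (forall i, (n + 1 <= i <= 2 * n - 1)%N ->
         Bl i *m Br i - Br i.+1 *m Bl i.+1 = 0)].

Definition s_dim (v : nat -> nat) (i : nat) : int :=
  if i == 1%N then 1 - (v 1%N)%:Z else 1 - (v i)%:Z + (v i.-1)%:Z.

Definition nonempty_cond (n : nat) (v : nat -> nat) : Prop :=
  (forall i, (1 <= i <= n)%N -> s_dim v i \in [:: -1; 0; 1]) /\
  (count (fun i => s_dim v i != 0) (iota 1 n) <= n)%N.

Definition bform (G : 'M[C]_2) (w y : 'cV[C]_2) : C := (w^T *m G *m y) 0 0.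

Definition skew_nondeg (G : 'M[C]_2) : Prop := G^T = - G /\ G \in unitmx.

Definition is_form_transpose (frm : 'cV[C]_2 -> 'cV[C]_2 -> C)
  (x xt : 'M[C]_2) : Prop :=
  forall w y : 'cV[C]_2, frm (x *m w) y = frm w (xt *m y).

From mathcomp Require Import all_boot all_algebra.
From mathcomp Require Import complex.
From mathcomp Require Import reals Rstruct.
From mathcomp Require Import ring zify.
Set Implicit Arguments. Unset Strict Implicit. Unset Printing Implicit Defensive.
Import GRing.Theory Num.Theory.
Local Open Scope ring_scope.

(* The relations of Lambda collapse the two loops at the vertex n
   into powers: B_{n,n-j+1,n} = P^(j-1) and B_{n,n+j-1,n} = Q^(j-1), where
   P = B_{n,n-1} B_{n-1,n} and Q = B_{n,n+1} B_{n+1,n}.  The vanishing boundary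
   maps make P and Q nilpotent, and the relation at n reads Q = -(P + Gamma Delta).
   The generating series A(t) = Delta (1 - tP)^-1 Gamma and
   B(t) = Delta (1 - t(P + Gamma Delta))^-1 Gamma of 2x2 matrices satisfy
   (1 - tA) B = A, and det (1 - tA) = 1 by Sylvester's determinant identity and
   nilpotency; for 2x2 matrices this forces B = - adj A, i.e.
   Delta (P + Gamma Delta)^k Gamma = - adj (Delta P^k Gamma).  Finally, for a
   skew form on C^2 the transpose of x with respect to (w, y) = <w, sigma y> is
   sigma (adj x) sigma, and the signs combine as (-1)^j (-1)^(j-1) = -1. *)


Lemma sum_ord2 (V : nmodType) (F : 'I_2 -> V) : \sum_(i < 2) F i = F 0 + F 1.
Proof. by rewrite !big_ord_recl big_ord0 addr0; congr (F _ + F _); apply: val_inj. Qed.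

Section Matrix2.
Variable R : comPzRingType.
Implicit Types A B : 'M[R]_2.

Lemma ord2P (i : 'I_2) : i = 0 \/ i = 1.
Proof. by case: i => [[|[|//]]] lti; [left | right]; apply: val_inj. Qed.

Lemma mx2P A B :
  A 0 0 = B 0 0 -> A 0 1 = B 0 1 -> A 1 0 = B 1 0 -> A 1 1 = B 1 1 -> A = B.
Proof.
move=> e00 e01 e10 e11; apply/matrixP => i j.
by case: (ord2P i) => ->; case: (ord2P j) => ->.
Qed.

Lemma mxtrace_mx2 A : \tr A = A 0 0 + A 1 1.
Proof. exact: sum_ord2. Qed.

Lemma lift_ord2 : lift 0 0 = 1 :> 'I_2 /\ lift 1 0 = 0 :> 'I_2.
Proof. by split; apply: val_inj. Qed.

Lemma det_mx2 A : \det A = A 0 0 * A 1 1 - A 0 1 * A 1 0.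
Proof.
rewrite (expand_det_row _ 0) sum_ord2 /cofactor !det_mx11 !mxE /=.
case: lift_ord2 => -> ->.
by rewrite !expr0 !expr1 !mul1r mulN1r mulrN.
Qed.

Lemma adj_mx2 A : \adj A = (\tr A)%:M - A.
Proof.
have [l00 l10] := lift_ord2.
apply: mx2P; rewrite !mxE /cofactor !det_mx11 !mxE /= mxtrace_mx2 ?l00 ?l10 /=.
all: rewrite ?expr0 ?expr1 ?mul1r ?mulN1r ?mulr1n ?mulr0n; ring.
Qed.

Lemma mx2_Cayley_Hamilton A : A *m A = \tr A *: A - (\det A)%:M.
Proof.
by rewrite -mul_mx_adj adj_mx2 mulmxBr mul_mx_scalar opprB addrC subrK.
Qed.

Lemma det_mx2_1B t A : \det (1%:M - t *: A) = 1 - t * \tr A + t ^+ 2 * \det A.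
Proof. by rewrite !det_mx2 mxtrace_mx2 !mxE /= ?mulr1n ?mulr0n; ring. Qed.

Lemma adj_mx2_1B t A : \adj (1%:M - t *: A) = (1 - t * \tr A)%:M + t *: A.
Proof.
by rewrite !adj_mx2 !mxtrace_mx2; apply: mx2P; rewrite !mxE /= ?mulr1n ?mulr0n; ring.
Qed.

End Matrix2.

Lemma map_mx_adj_mx2 (R S : comPzRingType) (f : {additive R -> S}) (A : 'M[R]_2) :
  map_mx f (\adj A) = \adj (map_mx f A).
Proof.
rewrite !adj_mx2 !mxtrace_mx2; apply/matrixP => i j.
by rewrite !mxE raddfB raddfMn raddfD.
Qed.

Lemma mx2_solve_unimodular (K : idomainType) (t : K) (A X : 'M[K]_2) : t != 0 ->
  \det (1%:M - t *: A) = 1 -> (1%:M - t *: A) *m X = A -> X = - \adj A.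
Proof.
move=> t_neq0 det1 eqX.
have trA : \tr A = t * \det A.
  have : t * (t * \det A - \tr A) = \det (1%:M - t *: A) - 1.
    by rewrite det_mx2_1B; ring.
  by rewrite det1 subrr => /eqP; rewrite mulf_eq0 (negbTE t_neq0) subr_eq0 => /eqP.
have {eqX} -> : X = \adj (1%:M - t *: A) *m A.
  by move: det1 eqX; set M := _ - _ => det1 <-; rewrite mulmxA mul_adj_mx det1 mul1mx.
rewrite adj_mx2_1B mulmxDl mul_scalar_mx -scalemxAl mx2_Cayley_Hamilton adj_mx2 trA.
by apply: mx2P; rewrite !mxE /= ?mulr1n ?mulr0n; ring.
Qed.

Lemma skew_mx2_trmx_mul (K : idomainType) (G A : 'M[K]_2) : 2 != 0 :> K ->
  G^T = - G -> A^T *m G = G *m \adj A.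
Proof.
move=> two_neq0 skewG.
have G_anti i j : G j i = - G i j.
  by have := congr1 (fun M : 'M[K]_2 => M i j) skewG; rewrite !mxE.
have G_diag i : G i i = 0.
  have : 2 * G i i = 0 by rewrite mulr_natl mulr2n {1}G_anti addNr.
  by move/eqP; rewrite mulf_eq0 (negbTE two_neq0) => /eqP.
rewrite adj_mx2 mxtrace_mx2; apply: mx2P.
all: rewrite !mxE !sum_ord2 !mxE /= ?G_diag ?(G_anti 0 1) ?mulr1n ?mulr0n; ring.
Qed.

Lemma two_neq0_C : 2 != 0 :> C.
Proof. by rewrite (pnatr_eq0 Rdefinitions.R[i] 2). Qed.

Lemma form_transpose_adj (sigma G a : 'M[C]_2) :
  sigma *m sigma = 1%:M -> G^T = - G ->
  is_form_transpose (fun w y => bform G w (sigma *m y)) a (sigma *m \adj a *m sigma).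
Proof.
move=> sigma2 skewG w y; rewrite /bform trmx_mul -!mulmxA.
rewrite (mulmxA sigma sigma) sigma2 mul1mx (mulmxA a^T).
by rewrite skew_mx2_trmx_mul ?two_neq0_C // -mulmxA.
Qed.

Lemma nilpotent_geometric_inverse (R : pzRingType) (x : R) d : x ^+ d = 0 ->
  (1 - x) * \sum_(i < d) x ^+ i = 1 /\ (\sum_(i < d) x ^+ i) * (1 - x) = 1.
Proof.
move=> xd0; have inv_l : (1 - x) * \sum_(i < d) x ^+ i = 1.
  by rewrite -opprB mulNr -subrX1 xd0 sub0r opprK.
split=> //; rewrite -[RHS]inv_l; apply/esym/commr_sum => i _.
exact/commrX/commr_sym/commrB/commr_refl/commr1.
Qed.

Lemma resolvent_identity (R : pzRingType) (a b r s : R) :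
  r * (1 - a) = 1 -> (1 - b) * s = 1 -> s = r + r * (b - a) * s.
Proof.
move=> ra sb; have -> : b - a = (1 - a) - (1 - b) by rewrite opprB [RHS]addrC addrA subrK.
by rewrite mulrBr mulrBl ra mul1r -mulrA sb mulr1 addrC subrK.
Qed.

Section GeometricSeries.
Variables (F : idomainType) (m : nat).
Local Notation lift := (map_mx (@polyC F)).

Lemma exp_scale_X_lift (M : 'M[F]_m) i : ('X *: lift M) ^+ i = 'X ^+ i *: lift (M ^+ i).
Proof.
elim: i => [|i IHi]; first by rewrite !expr0 scale1r map_mx1.
rewrite exprS IHi -mulmxE -scalemxAl -scalemxAr scalerA -exprS.
by rewrite -map_mxM mulmxE -exprS.
Qed.

Lemma scale_X_lift_nilpotent (M : 'M[F]_m) d :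
  M ^+ d = 0 -> ('X *: lift M) ^+ d = 0.
Proof. by move=> Md0; rewrite exp_scale_X_lift Md0 map_mx0 scaler0. Qed.

Lemma det_1B_X_lift_nilpotent (M : 'M[F]_m) d :
  M ^+ d = 0 -> \det (1%:M - 'X *: lift M) = 1.
Proof.
move=> /scale_X_lift_nilpotent/nilpotent_geometric_inverse[inv_l _].
have : \det (1%:M - 'X *: lift M) \is a GRing.unit.
  apply/unitrPr; exists (\det (\sum_(i < d) ('X *: lift M) ^+ i)).
  by rewrite -det_mulmx mulmxE inv_l // det1.
rewrite poly_unitE => /andP[/eqP size1 _].
rewrite [LHS]size1_polyC ?size1 // -horner_coef0 -horner_evalE -det_map_mx.
rewrite [map_mx _ _](_ : _ = 1%:M) ?det1 //; apply/matrixP => i j.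
rewrite !mxE /= horner_evalE hornerD hornerN hornerM hornerX mul0r subr0.
by rewrite hornerMn hornerC.
Qed.

Lemma coef_compression_geometric p q (M : 'M[F]_m) (D : 'M_(p, m)) (E : 'M_(m, q)) d k :
  (k < d)%N ->
  map_mx (coefp k) (lift D *m (\sum_(l < d) ('X *: lift M) ^+ l) *m lift E) =
  D *m M ^+ k *m E.
Proof.
move=> lt_kd; apply/matrixP => i j; rewrite mxE /= mulmx_sumr mulmx_suml summxE.
rewrite coef_sum (bigD1 (Ordinal lt_kd)) //=.
rewrite big1 => [|l /negbTE neq_lk]; rewrite exp_scale_X_lift -scalemxAr -scalemxAl.
  by rewrite -!map_mxM !mxE mulrC coefCM coefXn eqxx mulr1 addr0.
rewrite -!map_mxM !mxE mulrC coefCM coefXn.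
suff -> : (k == l) = false by rewrite mulr0.
by apply: contraFF neq_lk => /eqP eq_kl; apply/eqP/val_inj.
Qed.
End GeometricSeries.

Lemma det_1B_mulmxC (R : comPzRingType) m k (U : 'M[R]_(m, k)) (V : 'M_(k, m)) :
  \det (1%:M - U *m V) = \det (1%:M - V *m U).
Proof.
have factor_l : block_mx 1%:M U V 1%:M =
    block_mx 1%:M 0 V 1%:M *m block_mx 1%:M U 0 (1%:M - V *m U).
  by rewrite mulmx_block ?mul1mx ?mul0mx ?mulmx0 ?mulmx1 ?addr0 ?add0r addrC subrK.
have factor_r : block_mx 1%:M U V 1%:M =
    block_mx (1%:M - U *m V) U 0 1%:M *m block_mx 1%:M 0 V 1%:M.
  by rewrite mulmx_block ?mul1mx ?mul0mx ?mulmx0 ?mulmx1 ?addr0 ?add0r subrK.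
have := congr1 determinant factor_l; rewrite factor_r !det_mulmx.
by rewrite !det_ublock !det_lblock !det1 !mul1r !mulr1.
Qed.

Section RankTwoPerturbation.
Variables (F : idomainType) (m d : nat).
Variables (P : 'M[F]_m) (Gam : 'M[F]_(m, 2)) (Del : 'M[F]_(2, m)).
Hypotheses (P_nil : P ^+ d = 0) (PGD_nil : (P + Gam *m Del) ^+ d = 0).

Local Notation lift := (map_mx (@polyC F)).
Local Notation geom M := (\sum_(i < d) ('X *: lift M) ^+ i).
Local Notation A := (lift Del *m geom P *m lift Gam).
Local Notation B := (lift Del *m geom (P + Gam *m Del) *m lift Gam).

Lemma scale_X_lift_add_rank2 :
  'X *: lift (P + Gam *m Del) = 'X *: lift P + 'X *: (lift Gam *m lift Del).
Proof. by rewrite map_mxD map_mxM scalerDr. Qed.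

Lemma compression_resolvent : (1%:M - 'X *: A) *m B = A.
Proof.
have [_ geomP_r] := nilpotent_geometric_inverse (scale_X_lift_nilpotent P_nil).
have [geomPGD_l _] := nilpotent_geometric_inverse (scale_X_lift_nilpotent PGD_nil).
have geom_eq := resolvent_identity geomP_r geomPGD_l.
have perturbation :
    'X *: lift (P + Gam *m Del) - 'X *: lift P = 'X *: (lift Gam *m lift Del).
  by rewrite scale_X_lift_add_rank2 addrAC subrr add0r.
rewrite perturbation in geom_eq.
have B_eq : B = A + 'X *: (A *m B).
  rewrite {1}geom_eq -!mulmxE mulmxDr mulmxDl; congr (_ + _).
  by rewrite !mulmxA -scalemxAr -!scalemxAl !mulmxA.
by rewrite mulmxBl mul1mx -scalemxAl {1}B_eq addrK.
Qed.

Lemma det_compression_resolvent : \det (1%:M - 'X *: A) = 1.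
Proof.
have [geomP_l geomP_r] := nilpotent_geometric_inverse (scale_X_lift_nilpotent P_nil).
have det_geomP : \det (geom P) = 1.
  have := congr1 determinant geomP_r.
  by rewrite -mulmxE det_mulmx -idmxE (det_1B_X_lift_nilpotent P_nil) mulr1 det1.
rewrite scalemxAr det_1B_mulmxC.
have -> : 1%:M - 'X *: lift Gam *m (lift Del *m geom P) =
          (1 - 'X *: lift (P + Gam *m Del)) * geom P.
  rewrite scale_X_lift_add_rank2 opprD addrA mulrDl geomP_l mulNr -!mulmxE.
  by rewrite mulmxA -scalemxAl idmxE.
by rewrite -mulmxE det_mulmx -idmxE (det_1B_X_lift_nilpotent PGD_nil) det_geomP mulr1.
Qed.

Lemma compression_rank2_perturbation k :
  Del *m (P + Gam *m Del) ^+ k *m Gam = - \adj (Del *m P ^+ k *m Gam).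
Proof.
have [lt_kd | le_dk] := ltnP k d; last first.
  have vanish (M : 'M[F]_m) : M ^+ d = 0 -> M ^+ k = 0.
    by move=> Md0; rewrite -(subnK le_dk) exprD Md0 mulr0.
  rewrite (vanish _ P_nil) (vanish _ PGD_nil) !mulmx0 !mul0mx adj_mx2.
  by rewrite linear0 raddf0 subr0 oppr0.
have X_neq0 : 'X != 0 :> {poly F} by rewrite polyX_eq0.
have B_eq := mx2_solve_unimodular X_neq0 det_compression_resolvent compression_resolvent.
by rewrite -(coef_compression_geometric _ _ _ lt_kd) B_eq map_mxN map_mx_adj_mx2
  (coef_compression_geometric _ _ _ lt_kd).
Qed.

End RankTwoPerturbation.

Lemma mulmx_exp_shift (R : pzRingType) p q (U : 'M[R]_(p, q)) (V : 'M_(q, p)) k :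
  U *m (V *m U) ^+ k *m V = (U *m V) ^+ k.+1.
Proof.
elim: k => [|k IHk]; first by rewrite !expr0 expr1 -idmxE mulmx1.
by rewrite exprSr -mulmxE !mulmxA IHk -mulmxA mulmxE -exprSr.
Qed.

Lemma exprN_mx (R : pzRingType) m (M : 'M[R]_m) k : (- M) ^+ k = (-1) ^+ k *: M ^+ k.
Proof.
elim: k => [|k IHk]; first by rewrite !expr0 scale1r.
by rewrite !exprSr IHk -!mulmxE mulmxN -scalemxAl mulrN1 scaleNr.
Qed.

Section ZigzagRelations.
Variables (n : nat) (v : nat -> nat).
Variables (Bl : forall i, 'M[C]_(v i, v i.-1)) (Br : forall i, 'M[C]_(v i.-1, v i)).
Hypotheses (Bl1 : Bl 1%N = 0) (Br2n : Br (2 * n)%N = 0).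
Hypothesis relL : forall i, (1 <= i <= n - 1)%N ->
  Br i.+1 *m Bl i.+1 - Bl i *m Br i = 0.
Hypothesis relR : forall i, (n + 1 <= i <= 2 * n - 1)%N ->
  Bl i *m Br i - Br i.+1 *m Bl i.+1 = 0.

Lemma loop_shift_left a : (0 < a < n)%N -> Br a.+1 *m Bl a.+1 = Bl a *m Br a.
Proof.
move=> /andP[a_gt0 lt_an]; apply/eqP; rewrite -subr_eq0; apply/eqP/relL.
by rewrite a_gt0 leq_subRL ?add1n // (leq_trans a_gt0 (ltnW lt_an)).
Qed.

Lemma loop_shift_right a : (n < a < 2 * n)%N -> Br a.+1 *m Bl a.+1 = Bl a *m Br a.
Proof.
move=> /andP[lt_na lt_a2n]; apply/eqP; rewrite eq_sym -subr_eq0; apply/eqP/relR.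
by rewrite addn1 lt_na leq_subRL ?add1n // (leq_trans _ lt_a2n).
Qed.

Lemma Ldown_exp k a : (0 < a <= n)%N -> Ldown Bl Br k a = (Bl a *m Br a) ^+ k.
Proof.
elim: k a => [|k IHk] [|[|a]] //= a_bounds; rewrite ?expr0 ?idmxE //.
  by rewrite Bl1 !mul0mx expr0n.
by rewrite IHk ?(ltnW a_bounds) // -loop_shift_left ?mulmx_exp_shift.
Qed.

Lemma Lup_exp k a : (n <= a < 2 * n)%N -> Lup Bl Br k a = (Br a.+1 *m Bl a.+1) ^+ k.
Proof.
elim: k a => [|k IHk] a /andP[le_na lt_a2n] /=; first by rewrite expr0 idmxE.
have [lt_a1_2n | le_2n_a1] := ltnP a.+1 (2 * n).
  by rewrite IHk ?lt_a1_2n ?leqW // loop_shift_right ?mulmx_exp_shift // ltnS le_na.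
have def_2n : (2 * n)%N = a.+1 by apply/eqP; rewrite eqn_leq le_2n_a1.
by move: Br2n; rewrite def_2n => ->; rewrite !mul0mx expr0n.
Qed.

Lemma left_loop_nilpotent a : (0 < a <= n)%N -> (Bl a *m Br a) ^+ a = 0.
Proof.
elim: a => [|[|a] IHa] //= a_bounds; first by rewrite Bl1 mul0mx expr1.
by rewrite -mulmx_exp_shift loop_shift_left ?IHa ?mulmx0 ?mul0mx ?(ltnW a_bounds).
Qed.

Lemma right_loop_nilpotent a : (n <= a < 2 * n)%N ->
  (Br a.+1 *m Bl a.+1) ^+ (2 * n - a) = 0.
Proof.
move=> /andP[le_na lt_a2n]; have [e def_e] : exists e, (2 * n - a)%N = e.+1.
  by exists (2 * n - a).-1; rewrite prednK // subn_gt0.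
elim: e a le_na lt_a2n def_e => [|e IHe] a le_na lt_a2n def_e; rewrite def_e.
  have def_2n : (2 * n)%N = a.+1 by lia.
  by move: Br2n; rewrite def_2n => ->; rewrite mul0mx expr1.
have IH : (Br a.+2 *m Bl a.+2) ^+ e.+1 = 0.
  by have := IHe a.+1; rewrite (_ : (2 * n - a.+1)%N = e.+1); [apply; lia | lia].
by rewrite -mulmx_exp_shift -loop_shift_right ?IH ?mulmx0 ?mul0mx //; lia.
Qed.

End ZigzagRelations.

Theorem lemma4p11 (n : nat) (hn : (1 <= n)%N) (v : nat -> nat)
  (hsym : forall i, (1 <= i <= 2 * n - 1)%N -> v i = v (2 * n - i)%N)
  (hne : nonempty_cond n v)
  (sigma : 'M[C]_2) (hsigma : sigma *m sigma = 1%:M)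
  (G : 'M[C]_2) (hG : skew_nondeg G)
  (Bl : forall i, 'M[C]_(v i, v i.-1)) (Br : forall i, 'M[C]_(v i.-1, v i))
  (Gam : 'M[C]_(v n, 2)) (Del : 'M[C]_(2, v n))
  (hL : in_Lambda Bl Br Gam Del) :
  forall j : nat, (1 <= j <= n)%N ->
    is_form_transpose (fun w y => bform G w (sigma *m y))
      (Del *m pathDown Bl Br n j *m Gam)
      ((-1) ^+ j *: (sigma *m Del *m pathUp Bl Br n j *m Gam *m sigma)).
Proof.
move=> j /andP[j_gt0 le_jn]; have [k def_j] : exists k, j = k.+1.
  by exists j.-1; rewrite prednK.
case: hL => [[Bl1 _] [_ Br2n] relL GD_eq relR].
have n_left : (0 < n <= n)%N by rewrite hn leqnn.
have n_right : (n <= n < 2 * n)%N by rewrite leqnn /=; lia.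
set P := Bl n *m Br n; set Q := Br n.+1 *m Bl n.+1.
have PGD_eq : P + Gam *m Del = - Q by rewrite -GD_eq addNKr.
have P_nil : P ^+ n = 0 := left_loop_nilpotent Bl1 relL n_left.
have PGD_nil : (P + Gam *m Del) ^+ n = 0.
  have := right_loop_nilpotent Br2n relR n_right.
  by rewrite mul2n -addnn addnK PGD_eq exprN_mx => ->; rewrite scaler0.
rewrite /pathDown /pathUp def_j /= (Ldown_exp Bl1 relL _ n_left).
rewrite (Lup_exp Br2n relR _ n_right) -/Q -[Q]opprK -PGD_eq exprN_mx.
rewrite -scalemxAr -!scalemxAl scalerA exprS mulN1r mulNr -expr2 sqrr_sign scaleN1r.
rewrite -/P -(mulmxA sigma) -(mulmxA sigma).
rewrite (compression_rank2_perturbation P_nil PGD_nil).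
by rewrite mulmxN mulNmx opprK; apply: form_transpose_adj hsigma hG.1.
Qed.
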